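(* Let $n\ge1$. Every configuration in $\Omega'_n$ can be divided uniquely into rectangular blocks of sizes $n\times n$, $n\times(n+1)$, $(n+1)\times n$ and $(n+1)\times(n+1)$, each containing a unique junction tile (tile of $J'_n$), located at its lower left corner.
   Context: $V_n=\{(v_0,v_1,v_2)\in\mathbb{Z}^3: 0\le v_0\le v_1\le 1,\ v_1\le v_2\le n+1\}$, elements written as words $v_0v_1v_2$. A Wang tile is $t=(a,b,c,d)$ with $\mathrm{RIGHT}(t)=a$, $\mathrm{TOP}(t)=b$, $\mathrm{LEFT}(t)=c$, $\mathrm{BOTTOM}(t)=d$; $\hat t=(b,a,d,c)$, $\hat S=\{\hat t:t\in S\}$. Define (as (right, top, left, bottom)): $W_n=\{(11(i+1),11(j+1),11i,11j):1\le i,j\le n\}$; $B'_n=\{(00(i+1),111,00i,11n):0\le i\le n\}$; $G_n=\{(01(i+1),111,00i,11(n+1)):0\le i\le n\}$; $Y_n=\{(01(i+1),112,01i,11(n+1)):1\le i\le n\}$; $A_n=\{(00(i+1),112,01i,11n):1\le i\le n\}$; $J'_n=\{((0,k,l),(0,r,s),(0,s,r+n),(0,l,k+n)):(k,l),(r,s)\in\{(0,0),(0,1),(1,1)\}\}$ (junction tiles). $\mathcal T'_n=W_n\cup B'_n\cup G_n\cup Y_n\cup A_n\cup\hat B'_n\cup\hat G_n\cup\hat Y_n\cup\hat A_n\cup J'_n$. $\Omega'_n$ is the set of configurations $x:\mathbb Z^2\to\mathcal T'_n$ with $\mathrm{RIGHT}(x(\mathbf m))=\mathrm{LEFT}(x(\mathbf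 m+\mathbf e_1))$ and $\mathrm{TOP}(x(\mathbf m))=\mathrm{BOTTOM}(x(\mathbf m+\mathbf e_2))$ for all $\mathbf m$. *)

From Stdlib Require Import ZArith Lia.
Open Scope Z_scope.

(* A colour is a word v0 v1 v2, represented as a triple of integers. *)
Definition color := (Z * Z * Z)%type.
Definition col (a b c : Z) : color := (a, b, c).

Definition tile := (color * color * color * color)%type.
Definition mkt (r t l b : color) : tile := (r, t, l, b).
Definition RIGHT (t : tile) : color := let '(r, _, _, _) := t in r.
Definition TOP (t : tile) : color := let '(_, tp, _, _) := t in tp.
Definition LEFT (t : tile) : color := let '(_, _, l, _) := t in l.
Definition BOTTOM (t : tile) : color := let '(_, _, _, b) := t in b.

Definition hat (t : tile) : tile := mkt (TOP t) (RIGHT t) (BOTTOM t) (LEFT t).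
Definition hatS (S : tile -> Prop) (t : tile) : Prop := exists s, S s /\ t = hat s.

Definition W_n (n : Z) (t : tile) : Prop :=
  exists i j, 1 <= i <= n /\ 1 <= j <= n /\
    t = mkt (col 1 1 (i+1)) (col 1 1 (j+1)) (col 1 1 i) (col 1 1 j).
Definition B'_n (n : Z) (t : tile) : Prop :=
  exists i, 0 <= i <= n /\ t = mkt (col 0 0 (i+1)) (col 1 1 1) (col 0 0 i) (col 1 1 n).
Definition G_n (n : Z) (t : tile) : Prop :=
  exists i, 0 <= i <= n /\ t = mkt (col 0 1 (i+1)) (col 1 1 1) (col 0 0 i) (col 1 1 (n+1)).
Definition Y_n (n : Z) (t : tile) : Prop :=
  exists i, 1 <= i <= n /\ t = mkt (col 0 1 (i+1)) (col 1 1 2) (col 0 1 i) (col 1 1 (n+1)).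
Definition A_n (n : Z) (t : tile) : Prop :=
  exists i, 1 <= i <= n /\ t = mkt (col 0 0 (i+1)) (col 1 1 2) (col 0 1 i) (col 1 1 n).

Definition kl_pair (k l : Z) : Prop :=
  (k = 0 /\ l = 0) \/ (k = 0 /\ l = 1) \/ (k = 1 /\ l = 1).

Definition J'_n (n : Z) (t : tile) : Prop :=
  exists k l r s, kl_pair k l /\ kl_pair r s /\
    t = mkt (col 0 k l) (col 0 r s) (col 0 s (r+n)) (col 0 l (k+n)).

Definition T'_n (n : Z) (t : tile) : Prop :=
  W_n n t \/ B'_n n t \/ G_n n t \/ Y_n n t \/ A_n n t \/
  hatS (B'_n n) t \/ hatS (G_n n) t \/ hatS (Y_n n) t \/ hatS (A_n n) t \/
  J'_n n t.

Definition pos := (Z * Z)%type.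
Definition config := pos -> tile.

Definition Omega' (n : Z) (x : config) : Prop :=
  (forall m, T'_n n (x m)) /\
  (forall p q, RIGHT (x (p, q)) = LEFT (x (p+1, q))) /\
  (forall p q, TOP (x (p, q)) = BOTTOM (x (p, q+1))).

Definition block := (Z * Z * Z * Z)%type.
Definition in_block (B : block) (m : pos) : Prop :=
  let '(a, b, w, h) := B in let '(p, q) := m in
  a <= p < a + w /\ b <= q < b + h.

Definition good_division (n : Z) (x : config) (P : block -> Prop) : Prop :=
  (forall a b w h, P (a, b, w, h) ->
     (w = n \/ w = n + 1) /\ (h = n \/ h = n + 1) /\
     J'_n n (x (a, b)) /\
     (forall m, in_block (a, b, w, h) m -> J'_n n (x m) -> m = (a, b))) /\
  (forall m, exists B, P B /\ in_block B m /\
     (forall B', P B' -> in_block B' m -> B' = B)).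

From Stdlib Require Import ZArith Lia Classical.
Open Scope Z_scope.

(* The letter v0 of a colour is carried unchanged across a tile horizontally
   and vertically, so it is constant on the left edges of a row and on the
   bottom edges of a column, and a tile is a junction exactly when both are 0.
   The junctions therefore form a product X × Y of "junction columns" and
   "junction rows", and the blocks are forced to be the products of the gaps
   between consecutive elements of X and of Y.  Along a row, the letter v2
   grows by one across each non-junction column while staying in [0, n], and
   across a junction column it drops from [n, n+1] to [v0, v0+1]; comparing
   a junction row with a non-junction row shows that consecutive junction
   columns are n or n+1 apart.  A non-junction row exists, for otherwise the
   letter v1 propagates from one junction column to the next with the wrong
   value. *)

Lemma Z_ind_from (P : Z -> Prop) (a : Z) :
  P a -> (forall j, a <= j -> P j -> P (j + 1)) -> forall j, a <= j -> P j.
Proof.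
  intros H0 HS j Hj.
  apply (Z.le_ind P) with a; [intros ? ? ->; reflexivity | exact H0 | | exact Hj].
  intros m Hm Pm; rewrite <- Z.add_1_r; auto.
Qed.

Lemma Z_const_of_succ {A : Type} (f : Z -> A) :
  (forall p, f (p + 1) = f p) -> forall p, f p = f 0.
Proof.
  intros Hf p; induction p using Z.peano_ind.
  - reflexivity.
  - rewrite <- Z.add_1_r, Hf; exact IHp.
  - rewrite <- IHp, <- (Hf (Z.pred p)); f_equal; lia.
Qed.

Lemma Z_max_in_interval (P : Z -> Prop) a b : a <= b -> P a ->
  exists c, a <= c <= b /\ P c /\ forall j, c < j <= b -> ~ P j.
Proof.
  intros Hab Pa; revert b Hab; refine (Z_ind_from _ a _ _).
  - exists a; repeat split; [lia | lia | exact Pa | lia].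
  - intros b Hab (c & Hc & Pc & Hmax).
    destruct (classic (P (b + 1))) as [Pb | nPb].
    + exists (b + 1); repeat split; [lia | lia | exact Pb | lia].
    + exists c; repeat split; [lia | lia | exact Pc |].
      intros j Hj; destruct (Z.eq_dec j (b + 1)) as [-> | ne]; [exact nPb | apply Hmax; lia].
Qed.

Lemma Z_min_in_interval (P : Z -> Prop) a b : a <= b -> P b ->
  exists c, a <= c <= b /\ P c /\ forall j, a <= j < c -> ~ P j.
Proof.
  intros Hab Pb.
  destruct (Z_max_in_interval (fun j => P (- j)) (- b) (- a)) as (c & Hc & Pc & Hmax).
  - lia.
  - rewrite Z.opp_involutive; exact Pb.
  - exists (- c); repeat split; [lia | lia | exact Pc |].
    intros j Hj; rewrite <- (Z.opp_involutive j); apply Hmax; lia.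
Qed.

Definition consecutive (X : Z -> Prop) (a b : Z) : Prop :=
  a < b /\ X a /\ X b /\ forall j, a < j < b -> ~ X j.

Lemma consecutive_enclosing (X : Z -> Prop) p :
  (exists a, a <= p /\ X a) -> (exists b, p < b /\ X b) ->
  exists a b, consecutive X a b /\ a <= p < b.
Proof.
  intros (a0 & Ha0 & Xa0) (b0 & Hb0 & Xb0).
  destruct (Z_max_in_interval X a0 p) as (a & Ha & Xa & Hmax); [lia | exact Xa0 |].
  destruct (Z_min_in_interval X (p + 1) b0) as (b & Hb & Xb & Hmin); [lia | exact Xb0 |].
  exists a, b; repeat split; [lia | exact Xa | exact Xb | | lia | lia].
  intros j Hj; destruct (Z.le_gt_cases j p); [apply Hmax | apply Hmin]; lia.
Qed.

Lemma consecutive_unique (X : Z -> Prop) a b a' b' p :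
  consecutive X a b -> consecutive X a' b' -> a <= p < b -> a' <= p < b' ->
  a = a' /\ b = b'.
Proof.
  intros (_ & Xa & Xb & Hint) (_ & Xa' & Xb' & Hint') Hp Hp'.
  assert (Ea : a = a').
  { destruct (Z.lt_trichotomy a a') as [lt | [eq | gt]]; [| exact eq |]; exfalso.
    - apply (Hint a'); [lia | exact Xa'].
    - apply (Hint' a); [lia | exact Xa]. }
  subst a'; split; [reflexivity |].
  destruct (Z.lt_trichotomy b b') as [lt | [eq | gt]]; [| exact eq |]; exfalso.
  - apply (Hint' b); [lia | exact Xb].
  - apply (Hint b'); [lia | exact Xb'].
Qed.

Definition grid_block (X Y : Z -> Prop) (B : block) : Prop :=
  let '(a, b, w, h) := B in consecutive X a (a + w) /\ consecutive Y b (b + h).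

Lemma grid_block_unique X Y B B' m :
  grid_block X Y B -> grid_block X Y B' -> in_block B m -> in_block B' m -> B = B'.
Proof.
  destruct B as [[[a b] w] h], B' as [[[a' b'] w'] h'], m as [p q]; cbn.
  intros [HX HY] [HX' HY'] Hm Hm'.
  destruct (consecutive_unique X _ _ _ _ p HX HX') as [-> Ew]; [lia | lia |].
  destruct (consecutive_unique Y _ _ _ _ q HY HY') as [-> Eh]; [lia | lia |].
  f_equal; [f_equal |]; lia.
Qed.

Section GoodDivision.

Variables (n : Z) (x : config) (X Y : Z -> Prop).
Hypothesis junction_iff : forall p q, J'_n n (x (p, q)) <-> X p /\ Y q.

Section Blocks.

Variable Q : block -> Prop.
Hypothesis HQ : good_division n x Q.

Lemma good_division_block_eq B B' m :
  Q B -> Q B' -> in_block B m -> in_block B' m -> B = B'.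
Proof.
  intros QB QB' Hm Hm'; destruct (proj2 HQ m) as (B0 & _ & _ & Huniq).
  rewrite (Huniq B), (Huniq B'); auto.
Qed.

Lemma good_division_corner_junction a b w h : Q (a, b, w, h) -> X a /\ Y b.
Proof. intros QB; apply junction_iff, (proj1 HQ a b w h QB). Qed.

Lemma good_division_corner a b w h p q :
  Q (a, b, w, h) -> in_block (a, b, w, h) (p, q) -> X p -> Y q -> p = a /\ q = b.
Proof.
  intros QB Hm Xp Yq; destruct (proj1 HQ a b w h QB) as (_ & _ & _ & Huniq).
  assert (E : (p, q) = (a, b)) by (apply Huniq; [exact Hm | apply junction_iff; auto]).
  injection E; auto.
Qed.

Hypothesis hn : 0 < n.

Lemma good_division_right_edge a b w h : Q (a, b, w, h) -> consecutive X a (a + w).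
Proof.
  intros QB; destruct (proj1 HQ a b w h QB) as (Hw & Hh & _).
  destruct (good_division_corner_junction _ _ _ _ QB) as [Xa Yb].
  assert (Hint : forall j, a < j < a + w -> ~ X j).
  { intros j Hj Xj.
    destruct (good_division_corner a b w h j b QB) as [E _];
      [cbn; lia | exact Xj | exact Yb | lia]. }
  repeat split; [lia | exact Xa | | exact Hint].
  destruct (proj2 HQ (a + w, b)) as ([[[a' b'] w'] h'] & QB' & Hm' & _); cbn in Hm'.
  destruct (good_division_corner_junction _ _ _ _ QB') as [Xa' _].
  destruct (Z.eq_dec a' (a + w)) as [<- | ne]; [exact Xa' | exfalso].
  (* Otherwise the block at (a + w, b) starts left of a, so it contains the junction (a, b). *)
  assert (a' <= a) by (apply Z.nlt_ge; intro; apply (Hint a'); [lia | exact Xa']).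
  destruct (good_division_corner a' b' w' h' a b QB') as [<- <-];
    [cbn; lia | exact Xa | exact Yb |].
  assert (E : (a, b, w, h) = (a, b, w', h')).
  { apply (good_division_block_eq _ _ (a, b)); [exact QB | exact QB' | cbn; lia | cbn; lia]. }
  injection E; lia.
Qed.

Lemma good_division_top_edge a b w h : Q (a, b, w, h) -> consecutive Y b (b + h).
Proof.
  intros QB; destruct (proj1 HQ a b w h QB) as (Hw & Hh & _).
  destruct (good_division_corner_junction _ _ _ _ QB) as [Xa Yb].
  assert (Hint : forall j, b < j < b + h -> ~ Y j).
  { intros j Hj Yj.
    destruct (good_division_corner a b w h a j QB) as [_ E];
      [cbn; lia | exact Xa | exact Yj | lia]. }
  repeat split; [lia | exact Yb | | exact Hint].
  destruct (proj2 HQ (a, b + h)) as ([[[a' b'] w'] h'] & QB' & Hm' & _); cbn in Hm'.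
  destruct (good_division_corner_junction _ _ _ _ QB') as [_ Yb'].
  destruct (Z.eq_dec b' (b + h)) as [<- | ne]; [exact Yb' | exfalso].
  assert (b' <= b) by (apply Z.nlt_ge; intro; apply (Hint b'); [lia | exact Yb']).
  destruct (good_division_corner a' b' w' h' a b QB') as [<- <-];
    [cbn; lia | exact Xa | exact Yb |].
  assert (E : (a, b, w, h) = (a, b, w', h')).
  { apply (good_division_block_eq _ _ (a, b)); [exact QB | exact QB' | cbn; lia | cbn; lia]. }
  injection E; lia.
Qed.

Lemma good_division_grid_block B : Q B -> grid_block X Y B.
Proof.
  destruct B as [[[a b] w] h]; intros QB.
  split; [exact (good_division_right_edge _ _ _ _ QB) | exact (good_division_top_edge _ _ _ _ QB)].
Qed.

End Blocks.

Lemma grid_block_good_division_unique Q : 0 < n -> good_division n x Q ->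
  forall B, grid_block X Y B <-> Q B.
Proof.
  intros hn HQ B; split; [| apply good_division_grid_block; assumption].
  destruct B as [[[a b] w] h]; intros HB.
  destruct (proj2 HQ (a, b)) as (B0 & QB0 & Hm0 & _).
  replace (a, b, w, h) with B0; [exact QB0 |].
  apply (grid_block_unique X Y _ _ (a, b));
    [apply (good_division_grid_block Q); assumption | exact HB | exact Hm0 |].
  destruct HB as [[Hw _] [Hh _]]; cbn; lia.
Qed.

Hypothesis X_enclosing : forall p, exists a b, consecutive X a b /\ a <= p < b.
Hypothesis Y_enclosing : forall q, exists a b, consecutive Y a b /\ a <= q < b.
Hypothesis X_gap : forall a b, consecutive X a b -> b - a = n \/ b - a = n + 1.
Hypothesis Y_gap : forall a b, consecutive Y a b -> b - a = n \/ b - a = n + 1.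

Lemma grid_good_division : good_division n x (grid_block X Y).
Proof.
  split.
  - intros a b w h [HX HY].
    pose proof (X_gap _ _ HX); pose proof (Y_gap _ _ HY).
    destruct HX as (_ & Xa & _ & HintX), HY as (_ & Yb & _ & HintY).
    repeat split; [lia | lia | apply junction_iff; auto |].
    intros [p q] [Hp Hq] [Xp Yq]%junction_iff.
    destruct (Z.eq_dec p a) as [-> | ne]; [| exfalso; apply (HintX p); [lia | exact Xp]].
    destruct (Z.eq_dec q b) as [-> | ne]; [| exfalso; apply (HintY q); [lia | exact Yq]].
    reflexivity.
  - intros [p q].
    destruct (X_enclosing p) as (a & a' & HX & Hp), (Y_enclosing q) as (b & b' & HY & Hq).
    assert (HB : grid_block X Y (a, b, a' - a, b' - b)) by (cbn; rewrite !Zplus_minus; auto).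
    exists (a, b, a' - a, b' - b); split; [exact HB | split; [cbn; lia |]].
    intros B' HB' Hm'; apply (grid_block_unique X Y _ _ (p, q));
      [exact HB' | exact HB | exact Hm' | cbn; lia].
Qed.

End GoodDivision.

Definition v0 (c : color) : Z := fst (fst c).
Definition v1 (c : color) : Z := snd (fst c).
Definition v2 (c : color) : Z := snd c.

Ltac tile_cases H :=
  unfold T'_n, W_n, B'_n, G_n, Y_n, A_n, hatS, J'_n, kl_pair in H;
  repeat match goal with
  | H : exists _, _ |- _ => destruct H
  | H : _ /\ _ |- _ => destruct H
  | H : _ \/ _ |- _ => destruct H
  end;
  subst; cbn [v0 v1 v2 LEFT RIGHT TOP BOTTOM mkt col hat fst snd] in *.

Lemma T'_n_v0_RIGHT n t : T'_n n t -> v0 (RIGHT t) = v0 (LEFT t).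
Proof. intros Ht; tile_cases Ht; lia. Qed.

Lemma T'_n_v0_TOP n t : T'_n n t -> v0 (TOP t) = v0 (BOTTOM t).
Proof. intros Ht; tile_cases Ht; lia. Qed.

Lemma T'_n_v0_BOTTOM_01 n t : T'_n n t -> v0 (BOTTOM t) = 0 \/ v0 (BOTTOM t) = 1.
Proof. intros Ht; tile_cases Ht; lia. Qed.

Lemma T'_n_junction n t : T'_n n t -> (J'_n n t <-> v0 (BOTTOM t) = 0 /\ v0 (LEFT t) = 0).
Proof.
  intros Ht; split.
  - intros (k & l & r & s & _ & _ & ->); split; reflexivity.
  - intros [HB HL].
    destruct Ht as [H | [H | [H | [H | [H | [H | [H | [H | [H | H]]]]]]]]]; try exact H;
      exfalso; tile_cases H; lia.
Qed.

Lemma T'_n_v2_RIGHT_succ n t : T'_n n t -> v0 (BOTTOM t) = 1 -> v2 (RIGHT t) = v2 (LEFT t) + 1.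
Proof. intros Ht; tile_cases Ht; lia. Qed.

Lemma T'_n_v2_LEFT_bounds n t : T'_n n t -> v0 (BOTTOM t) = 1 -> 0 <= v2 (LEFT t) <= n.
Proof. intros Ht; tile_cases Ht; lia. Qed.

Lemma T'_n_v2_junction_col n t : T'_n n t -> v0 (BOTTOM t) = 0 ->
  n <= v2 (LEFT t) <= n + 1 /\ v0 (LEFT t) <= v2 (RIGHT t) <= v0 (LEFT t) + 1.
Proof. intros Ht; tile_cases Ht; lia. Qed.

Lemma T'_n_v2_TOP_BOTTOM n t : T'_n n t -> v0 (LEFT t) = 0 ->
  v2 (TOP t) = v1 (LEFT t) + v0 (BOTTOM t) /\ v2 (BOTTOM t) = n + v1 (RIGHT t) /\
  0 <= v1 (RIGHT t) /\ v1 (LEFT t) <= 1.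
Proof. intros Ht; tile_cases Ht; lia. Qed.

Lemma hat_involutive t : hat (hat t) = t.
Proof. destruct t as [[[r tp] l] b]; reflexivity. Qed.

Lemma hatS_hat S t : S t -> hatS S (hat t).
Proof. intros; exists t; auto. Qed.

Lemma hatS_inv S t : hatS S t -> S (hat t).
Proof. intros (s & Hs & ->); rewrite hat_involutive; exact Hs. Qed.

Lemma W_n_hat n t : W_n n t -> W_n n (hat t).
Proof. intros (i & j & Hi & Hj & ->); exists j, i; auto. Qed.

Lemma J'_n_hat n t : J'_n n t -> J'_n n (hat t).
Proof. intros (k & l & r & s & Hkl & Hrs & ->); exists r, s, k, l; auto. Qed.

Lemma T'_n_hat n t : T'_n n t -> T'_n n (hat t).
Proof.
  unfold T'_n; intros [H | [H | [H | [H | [H | [H | [H | [H | [H | H]]]]]]]]].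
  - left; exact (W_n_hat _ _ H).
  - do 5 right; left; exact (hatS_hat _ _ H).
  - do 6 right; left; exact (hatS_hat _ _ H).
  - do 7 right; left; exact (hatS_hat _ _ H).
  - do 8 right; left; exact (hatS_hat _ _ H).
  - right; left; exact (hatS_inv _ _ H).
  - do 2 right; left; exact (hatS_inv _ _ H).
  - do 3 right; left; exact (hatS_inv _ _ H).
  - do 4 right; left; exact (hatS_inv _ _ H).
  - do 9 right; exact (J'_n_hat _ _ H).
Qed.

Definition tr (x : config) : config := fun m => hat (x (snd m, fst m)).

Lemma Omega'_tr n x : Omega' n x -> Omega' n (tr x).
Proof.
  intros (HT & HR & HU); split; [| split].
  - intros [p q]; apply T'_n_hat, HT.
  - intros p q; exact (HU q p).
  - intros p q; exact (HR q p).
Qed.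

Definition junction_col (x : config) (p : Z) : Prop := v0 (BOTTOM (x (p, 0))) = 0.
Definition junction_row (x : config) (q : Z) : Prop := junction_col (tr x) q.

Section Configuration.

Variables (n : Z) (x : config).
Hypothesis hn : 1 <= n.
Hypothesis hx : Omega' n x.

Lemma Omega'_tile p q : T'_n n (x (p, q)).
Proof. apply hx. Qed.

Lemma Omega'_glue_h p q : LEFT (x (p + 1, q)) = RIGHT (x (p, q)).
Proof. symmetry; apply hx. Qed.

Lemma Omega'_glue_v p q : BOTTOM (x (p, q + 1)) = TOP (x (p, q)).
Proof. symmetry; apply hx. Qed.

Lemma v0_BOTTOM_col p q : v0 (BOTTOM (x (p, q))) = v0 (BOTTOM (x (p, 0))).
Proof.
  apply (Z_const_of_succ (fun q => v0 (BOTTOM (x (p, q))))); intros q'; cbn beta.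
  rewrite Omega'_glue_v; apply (T'_n_v0_TOP n), Omega'_tile.
Qed.

Lemma v0_LEFT_row p q : v0 (LEFT (x (p, q))) = v0 (LEFT (x (0, q))).
Proof.
  apply (Z_const_of_succ (fun p => v0 (LEFT (x (p, q))))); intros p'; cbn beta.
  rewrite Omega'_glue_h; apply (T'_n_v0_RIGHT n), Omega'_tile.
Qed.

Lemma v0_BOTTOM_junction_col p q : junction_col x p -> v0 (BOTTOM (x (p, q))) = 0.
Proof. rewrite v0_BOTTOM_col; auto. Qed.

Lemma v0_BOTTOM_nonjunction_col p q : ~ junction_col x p -> v0 (BOTTOM (x (p, q))) = 1.
Proof.
  unfold junction_col; rewrite <- (v0_BOTTOM_col p q).
  destruct (T'_n_v0_BOTTOM_01 n _ (Omega'_tile p q)); tauto.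
Qed.

Lemma v0_LEFT_junction_row p q : junction_row x q -> v0 (LEFT (x (p, q))) = 0.
Proof. rewrite v0_LEFT_row; auto. Qed.

Lemma v0_LEFT_nonjunction_row p q : ~ junction_row x q -> v0 (LEFT (x (p, q))) = 1.
Proof.
  unfold junction_row, junction_col, tr; cbn; rewrite <- (v0_LEFT_row p q).
  destruct (T'_n_v0_BOTTOM_01 n _ (T'_n_hat n _ (Omega'_tile p q))); cbn in *; tauto.
Qed.

Lemma junction_iff p q : J'_n n (x (p, q)) <-> junction_col x p /\ junction_row x q.
Proof.
  unfold junction_row, junction_col, tr; cbn.
  rewrite <- (v0_BOTTOM_col p q), <- (v0_LEFT_row p q); apply T'_n_junction, Omega'_tile.
Qed.

Lemma v2_LEFT_run a b q : a <= b -> (forall j, a <= j < b -> ~ junction_col x j) ->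
  v2 (LEFT (x (b, q))) = v2 (LEFT (x (a, q))) + (b - a).
Proof.
  intros Hab; revert b Hab; refine (Z_ind_from _ a _ _); [intros; lia |].
  intros b Hab IH Hcross.
  assert (Hb : ~ junction_col x b) by (apply Hcross; lia).
  rewrite Omega'_glue_h, (T'_n_v2_RIGHT_succ n _ (Omega'_tile b q));
    [rewrite IH; [lia |] | exact (v0_BOTTOM_nonjunction_col b q Hb)].
  intros j Hj; apply Hcross; lia.
Qed.

Lemma v1_adjacent_junction_rows p q : junction_row x q -> junction_row x (q + 1) ->
  v1 (LEFT (x (p, q))) + v0 (BOTTOM (x (p, q))) = n + v1 (RIGHT (x (p, q + 1))).
Proof.
  intros Yq Yq1.
  destruct (T'_n_v2_TOP_BOTTOM n _ (Omega'_tile p q) (v0_LEFT_junction_row p q Yq)) as (Htop & _).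
  destruct (T'_n_v2_TOP_BOTTOM n _ (Omega'_tile p (q + 1)) (v0_LEFT_junction_row p (q + 1) Yq1))
    as (_ & Hbot & _).
  rewrite Omega'_glue_v in Hbot; lia.
Qed.

Lemma junction_col_window p : exists a, p <= a <= p + n + 1 /\ junction_col x a.
Proof.
  apply NNPP; intros Hnone.
  assert (Hcross : forall j, p <= j <= p + n + 1 -> ~ junction_col x j)
    by (intros j Hj Xj; apply Hnone; exists j; auto).
  pose proof (v2_LEFT_run p (p + n + 1) 0 ltac:(lia) ltac:(intros; apply Hcross; lia)).
  pose proof (T'_n_v2_LEFT_bounds n _ (Omega'_tile p 0)
    (v0_BOTTOM_nonjunction_col p 0 (Hcross p ltac:(lia)))).
  pose proof (T'_n_v2_LEFT_bounds n _ (Omega'_tile (p + n + 1) 0)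
    (v0_BOTTOM_nonjunction_col (p + n + 1) 0 (Hcross (p + n + 1) ltac:(lia)))).
  lia.
Qed.

Lemma junction_col_enclosing p : exists a b, consecutive (junction_col x) a b /\ a <= p < b.
Proof.
  apply consecutive_enclosing.
  - destruct (junction_col_window (p - n - 1)) as (a & Ha & Xa); exists a; split; [lia | exact Xa].
  - destruct (junction_col_window (p + 1)) as (a & Ha & Xa); exists a; split; [lia | exact Xa].
Qed.

End Configuration.

Lemma exists_nonjunction_row n x (hn : 1 <= n) (hx : Omega' n x) : exists q, ~ junction_row x q.
Proof.
  apply NNPP; intros Hnone.
  assert (Hrow : forall q, junction_row x q)
    by (intros q; apply NNPP; intros H; apply Hnone; eauto).
  pose proof (fun p q => v1_adjacent_junction_rows n x hx p q (Hrow q) (Hrow (q + 1))) as Hvert.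
  pose (bounds p q := T'_n_v2_TOP_BOTTOM n _ (Omega'_tile n x hx p q)
    (v0_LEFT_junction_row n x hx p q (Hrow q))).
  (* Down a junction column, v1 on a left edge is n plus v1 on the right edge above,
     while v1 (LEFT _) <= 1 <= n. *)
  assert (Hjunction : forall c q, junction_col x c ->
    n = 1 /\ v1 (LEFT (x (c, q))) = 1 /\ v1 (RIGHT (x (c, q))) = 0).
  { intros c q Xc.
    pose proof (Hvert c q) as E; pose proof (Hvert c (q - 1)) as E'.
    replace (q - 1 + 1) with q in E' by lia.
    rewrite (v0_BOTTOM_junction_col n x hx c q Xc) in E.
    rewrite (v0_BOTTOM_junction_col n x hx c (q - 1) Xc) in E'.
    destruct (bounds c q) as (_ & _ & _ & HL), (bounds c (q + 1)) as (_ & _ & HR' & _).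
    destruct (bounds c (q - 1)) as (_ & _ & _ & HL'), (bounds c q) as (_ & _ & HR & _).
    lia. }
  destruct (junction_col_enclosing n x hn hx 0) as (a & b & (Hab & Xa & Xb & Hint) & _).
  assert (Hzero : forall j, a <= j -> j < b -> forall q, v1 (RIGHT (x (j, q))) = 0).
  { refine (Z_ind_from _ a _ _); [intros _ q; apply (Hjunction a q Xa) |].
    intros j Hj IH Hjb q.
    pose proof (Hvert (j + 1) (q - 1)) as E; replace (q - 1 + 1) with q in E by lia.
    rewrite (v0_BOTTOM_nonjunction_col n x hx), (Omega'_glue_h n x hx), IH in E
      by (try apply Hint; lia).
    destruct (Hjunction a 0 Xa); lia. }
  destruct (Hjunction b 0 Xb) as (_ & Hb & _).
  replace b with (b - 1 + 1) in Hb by lia.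
  rewrite (Omega'_glue_h n x hx), Hzero in Hb; lia.
Qed.

Lemma junction_col_gap n x (hn : 1 <= n) (hx : Omega' n x) a b :
  consecutive (junction_col x) a b -> b - a = n \/ b - a = n + 1.
Proof.
  intros (Hab & Xa & Xb & Hint).
  assert (Hspan : forall q, v2 (LEFT (x (b, q))) = v2 (RIGHT (x (a, q))) + (b - a - 1)).
  { intros q; rewrite (v2_LEFT_run n x hx (a + 1) b q), (Omega'_glue_h n x hx); [lia | lia |].
    intros j Hj; apply Hint; lia. }
  assert (Hends : forall c q, junction_col x c -> n <= v2 (LEFT (x (c, q))) <= n + 1 /\
      v0 (LEFT (x (c, q))) <= v2 (RIGHT (x (c, q))) <= v0 (LEFT (x (c, q))) + 1).
  { intros c q Xc.
    exact (T'_n_v2_junction_col n _ (Omega'_tile n x hx c q)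
      (v0_BOTTOM_junction_col n x hx c q Xc)). }
  (* A junction row and a non-junction row give the two bounds. *)
  destruct (junction_col_window n (tr x) hn (Omega'_tr n x hx) 0) as (q0 & _ & Y0).
  destruct (exists_nonjunction_row n x hn hx) as [q1 Y1].
  pose proof (Hspan q0); pose proof (Hspan q1).
  pose proof (Hends b q0 Xb); pose proof (Hends a q0 Xa).
  pose proof (Hends b q1 Xb); pose proof (Hends a q1 Xa).
  pose proof (v0_LEFT_junction_row n x hx a q0 Y0).
  pose proof (v0_LEFT_nonjunction_row n x hx a q1 Y1).
  lia.
Qed.

Theorem proposition6p4 (n : Z) (hn : 1 <= n) (x : config) (hx : Omega' n x) :
  exists P : block -> Prop, good_division n x P /\
    (forall Q : block -> Prop, good_division n x Q -> forall B, P B <-> Q B).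
Proof.
  pose proof (Omega'_tr n x hx) as htx.
  exists (grid_block (junction_col x) (junction_row x)); split.
  - apply (grid_good_division n x).
    + exact (junction_iff n x hx).
    + exact (junction_col_enclosing n x hn hx).
    + exact (junction_col_enclosing n (tr x) hn htx).
    + exact (junction_col_gap n x hn hx).
    + exact (junction_col_gap n (tr x) hn htx).
  - intros Q HQ.
    apply (grid_block_good_division_unique n x); [exact (junction_iff n x hx) | lia | exact HQ].
Qed.
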